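(* For every integer $n\ge 1$, $\chi_\rho(X_n)=3$ and $\chi_\rho(Y_n)=3$.
   Context: All graphs are finite and simple; $d(u,v)$ is the shortest-path distance. A $k$-packing coloring of $G$ is a map $c:V(G)\to\{1,\dots,k\}$ such that whenever $u\neq v$ and $c(u)=c(v)=i$, we have $d(u,v)>i$. $\chi_\rho(G)$ is the least $k$ such that $G$ has a $k$-packing coloring. $P_n$ is the path on $n$ vertices. $X_n$ is obtained from the disjoint union of $K_3$ and $P_n$ by adding an edge joining a vertex of $K_3$ to an end vertex of $P_n$ (the unique vertex if $n=1$). $Y_n$ is obtained from the disjoint union of $C_4$ and $P_n$ by adding an edge joining a vertex of $C_4$ to an end vertex of $P_n$ (the unique vertex if $n=1$). *)

From mathcomp Require Import all_boot.
Set Implicit Arguments. Unset Strict Implicit. Unset Printing Implicit Defensive.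

Definition dist_le (T : finType) (e : rel T) (i : nat) (u v : T) : Prop :=
  exists p : seq T, [/\ path e u p, last u p = v & size p <= i].

Definition packing_coloring (T : finType) (e : rel T) (k : nat) (c : T -> nat) : Prop :=
  (forall v, 1 <= c v <= k) /\
  (forall u v, u != v -> c u = c v -> ~ dist_le e (c u) u v).

Definition packing_chromatic_number_is (T : finType) (e : rel T) (k : nat) : Prop :=
  (exists c, packing_coloring e k c) /\
  (forall k', (exists c, packing_coloring e k' c) -> k <= k').

Definition symc (r : nat -> nat -> bool) (x y : nat) : bool := r x y || r y x.

(* X_n on vertices 0..n+2: K_3 on {0,1,2}, path 3-4-...-(n+2), edge 0-3. *)
Definition X_edge_nat (x y : nat) : bool :=
  [|| [&& x < 3, y < 3 & x != y],
      symc (fun a b => (3 <= a) && (b == a.+1)) x y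
    | symc (fun a b => (a == 0) && (b == 3)) x y].

Definition X_graph (n : nat) : rel 'I_(n + 3) := fun x y => X_edge_nat x y.

(* Y_n on vertices 0..n+3: C_4 = 0-1-2-3-0, path 4-5-...-(n+3), edge 0-4. *)
Definition Y_edge_nat (x y : nat) : bool :=
  [|| symc (fun a b => (a < 3) && (b == a.+1)) x y,
      symc (fun a b => (a == 0) && (b == 3)) x y,
      symc (fun a b => (4 <= a) && (b == a.+1)) x y
    | symc (fun a b => (a == 0) && (b == 4)) x y].

Definition Y_graph (n : nat) : rel 'I_(n + 4) := fun x y => Y_edge_nat x y.

From mathcomp Require Import all_boot zify.

Set Implicit Arguments.
Unset Strict Implicit.

(* Upper bound: give every vertex a level that changes by at most one along an
   edge, so that the level difference of two vertices bounds their distance from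
   below.  Colour the attachment vertex and the path by the level-periodic
   pattern 3,1,2,1,3,1,2,1,...: two vertices of colour j >= 2 then differ in level
   by a multiple of 4 > j, and colour 1 only needs the colouring to be proper.
   Lower bound: the triangle of X_n needs three distinct colours; in the 4-cycle
   of Y_n, a 2-colouring repeats a colour on each diagonal, at distance 2, which
   forces every vertex to colour 1. *)

Section LevelCertificate.

Variables (T : finType) (e : rel T) (level : T -> nat).

Hypothesis level_lipschitz :
  forall x y, e x y -> level y <= (level x).+1 /\ level x <= (level y).+1.

Lemma path_level_bound u p :
  path e u p -> level (last u p) <= level u + size p /\ level u <= level (last u p) + size p.
Proof.
elim: p u => [|x p IHp] u /=; first by lia.
by move=> /andP[/level_lipschitz exu /IHp]; lia.
Qed.

Lemma dist_le_level_bound i u v :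
  dist_le e i u v -> level v <= level u + i /\ level u <= level v + i.
Proof. by move=> [p [/path_level_bound + <-]]; lia. Qed.

Variables (k : nat) (c : T -> nat).

Hypotheses (c_range : forall v, 1 <= c v <= k)
           (c_proper : forall x y, e x y -> c x != c y)
           (c_spread : forall x y, x != y -> c x = c y -> 2 <= c x ->
                         c x + level y < level x \/ c x + level x < level y).

Lemma packing_coloring_of_level : packing_coloring e k c.
Proof.
split=> // u v uv cuv.
have [c_gt1 /dist_le_level_bound|c_le1] := ltnP 1 (c u).
  by have := c_spread uv cuv c_gt1; lia.
case=> [[|x [|y p]]] /= [].
- by move=> _ eq_uv; rewrite eq_uv eqxx in uv.
- by rewrite andbT => /c_proper + xv; rewrite xv cuv eqxx.
- by lia.
Qed.

End LevelCertificate.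

Section PackingColoringLowerBound.

Variables (T : finType) (e : rel T) (k : nat) (c : T -> nat).
Hypothesis c_packing : packing_coloring e k c.

Lemma packing_coloring_adj u v : u != v -> e u v -> c u != c v.
Proof.
move=> uv euv; apply/eqP => cuv; apply: c_packing.2 uv cuv _.
have := c_packing.1 u; exists [:: v]; split=> //=; [by rewrite euv | lia].
Qed.

Lemma packing_coloring_dist2 u w v : u != v -> e u w -> e w v -> c u = c v -> c u = 1.
Proof.
move=> uv euw ewv cuv; have := c_packing.1 u.
have [c_gt1|] := ltnP 1 (c u); last by lia.
case: (c_packing.2 _ _ uv cuv); exists [:: w; v]; split=> //=.
by rewrite euw ewv.
Qed.

Lemma triangle_packing_colors u v w :
  u != v -> v != w -> u != w -> e u v -> e v w -> e u w -> 3 <= k.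
Proof.
move=> uv vw uw /(packing_coloring_adj uv) cuv /(packing_coloring_adj vw) cvw.
move=> /(packing_coloring_adj uw) cuw.
by have := c_packing.1 u; have := c_packing.1 v; have := c_packing.1 w; lia.
Qed.

Lemma square_packing_colors u0 u1 u2 u3 :
  u0 != u1 -> u1 != u2 -> u2 != u3 -> u3 != u0 -> u0 != u2 -> u1 != u3 ->
  e u0 u1 -> e u1 u2 -> e u2 u3 -> e u3 u0 -> 3 <= k.
Proof.
move=> u01 u12 u23 u30 u02 u13 e01 e12 e23 e30.
have c01 := packing_coloring_adj u01 e01; have c12 := packing_coloring_adj u12 e12.
have c23 := packing_coloring_adj u23 e23; have c30 := packing_coloring_adj u30 e30.
have c02 := packing_coloring_dist2 u02 e01 e12.
have c13 := packing_coloring_dist2 u13 e12 e23.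
have := c_packing.1 u0; have := c_packing.1 u1.
by have := c_packing.1 u2; have := c_packing.1 u3; lia.
Qed.

End PackingColoringLowerBound.

Definition path_color p := if odd p then 1 else if 4 %| p then 3 else 2.

Definition X_level v := if v == 0 then 1 else if v < 3 then 0 else v.-1.
Definition X_color v :=
  if v == 1 then 1 else if v == 2 then 2 else path_color (X_level v).-1.

Definition Y_level v := if v == 0 then 1 else if v < 4 then 0 else v - 2.
Definition Y_color v :=
  if v == 2 then 2 else if 0 < v < 4 then 1 else path_color (Y_level v).-1.

(* Conditionals are split innermost first, so that no test is left inside another one. *)
Ltac case_check :=
  rewrite ?/X_edge_nat ?/Y_edge_nat ?/symc ?/X_color ?/Y_color ?/X_level ?/Y_level
    ?/path_color;
  repeat match goal with
  | |- context[if ?b then _ else _] =>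
      lazymatch b with context[if _ then _ else _] => fail | _ => case: (boolP b) => ? end
  end;
  lia.

Lemma X_level_lipschitz x y :
  X_edge_nat x y -> X_level y <= (X_level x).+1 /\ X_level x <= (X_level y).+1.
Proof. by case_check. Qed.

Lemma X_color_range v : 1 <= X_color v <= 3.
Proof. by case_check. Qed.

Lemma X_color_proper x y : X_edge_nat x y -> X_color x != X_color y.
Proof. by case_check. Qed.

Lemma X_color_spread x y : x != y -> X_color x = X_color y -> 2 <= X_color x ->
  X_color x + X_level y < X_level x \/ X_color x + X_level x < X_level y.
Proof. by case_check. Qed.

Lemma Y_level_lipschitz x y :
  Y_edge_nat x y -> Y_level y <= (Y_level x).+1 /\ Y_level x <= (Y_level y).+1.
Proof. by case_check. Qed.

Lemma Y_color_range v : 1 <= Y_color v <= 3.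
Proof. by case_check. Qed.

Lemma Y_color_proper x y : Y_edge_nat x y -> Y_color x != Y_color y.
Proof. by case_check. Qed.

Lemma Y_color_spread x y : x != y -> Y_color x = Y_color y -> 2 <= Y_color x ->
  Y_color x + Y_level y < Y_level x \/ Y_color x + Y_level x < Y_level y.
Proof. by case_check. Qed.

Lemma X_graph_packing_coloring n :
  packing_coloring (@X_graph n) 3 (fun v => X_color v).
Proof.
apply: (packing_coloring_of_level (level := fun v : 'I_(n + 3) => X_level v))
  => [x y|v|x y|x y].
- exact: X_level_lipschitz.
- exact: X_color_range.
- exact: X_color_proper.
- exact: X_color_spread.
Qed.

Lemma Y_graph_packing_coloring n :
  packing_coloring (@Y_graph n) 3 (fun v => Y_color v).
Proof.
apply: (packing_coloring_of_level (level := fun v : 'I_(n + 4) => Y_level v))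
  => [x y|v|x y|x y].
- exact: Y_level_lipschitz.
- exact: Y_color_range.
- exact: Y_color_proper.
- exact: Y_color_spread.
Qed.

Lemma X_graph_packing_colors n k c : packing_coloring (@X_graph n) k c -> 3 <= k.
Proof.
pose v i (lt_i3 : i < 3) : 'I_(n + 3) := Ordinal (ltn_addl n lt_i3).
move=> c_packing.
exact: (@triangle_packing_colors _ _ _ _ c_packing (v 0 isT) (v 1 isT) (v 2 isT)).
Qed.

Lemma Y_graph_packing_colors n k c : packing_coloring (@Y_graph n) k c -> 3 <= k.
Proof.
pose v i (lt_i4 : i < 4) : 'I_(n + 4) := Ordinal (ltn_addl n lt_i4).
move=> c_packing.
exact: (@square_packing_colors _ _ _ _ c_packing (v 0 isT) (v 1 isT) (v 2 isT) (v 3 isT)).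
Qed.

Theorem mainTheorem5 (n : nat) (hn : 1 <= n) :
  packing_chromatic_number_is (@X_graph n) 3 /\
  packing_chromatic_number_is (@Y_graph n) 3.
Proof.
split; split.
- exact: ex_intro _ _ (X_graph_packing_coloring n).
- by move=> k [c /X_graph_packing_colors].
- exact: ex_intro _ _ (Y_graph_packing_coloring n).
- by move=> k [c /Y_graph_packing_colors].
Qed.
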